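(* Let $\varphi$ be any forecasting system and $T$ a computable test supermartingale for $\varphi$. Then there is a recursive, positive, rational-valued test supermartingale $R$ for $\varphi$ such that $|4R(s)-T(s)|\le4\cdot2^{-|s|}$ for all $s\in\mathbb S$.
   Context: $\mathbb S$ is the set of finite binary strings, $\square$ the empty string, $|s|$ length, $sx$ concatenation. $\mathcal I$: nonempty closed subintervals of $[0,1]$; $\overline E_I(f)=\max_{p\in I}[pf(1)+(1-p)f(0)]$ for $f:\{0,1\}\to\mathbb R$. Forecasting system: any $\varphi:\mathbb S\to\mathcal I$. A supermartingale for $\varphi$ is $M:\mathbb S\to\mathbb R$ with $\overline E_{\varphi(s)}(M(s\,\cdot))\le M(s)$ for all $s$ ($M(s\,\cdot):x\mapsto M(sx)$); a test supermartingale is a non-negative one with $M(\square)=1$. A real map $r:\mathbb S\to\mathbb R$ is computable if there is a recursive $q:\mathbb S\times\mathbb N_0\to\mathbb Q$ with $|r(s)-q(s,N)|\le2^{-N}$ for all $s,N$; a rational-valued process is recursive if it is a recursive map $\mathbb S\to\mathbb Q$. *)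

From Stdlib Require Import Reals Lra Lia List.
Import ListNotations.
Open Scope R_scope.

(** Finite binary strings: [list bool]; [s ++ [x]] is the concatenation sx. *)
Definition bstr := list bool.

Record interval := mkInterval {
  lo : R; hi : R;
  lo_ge0 : 0 <= lo; lo_le_hi : lo <= hi; hi_le1 : hi <= 1 }.

Definition lin_exp (p : R) (f : bool -> R) : R := p * f true + (1 - p) * f false.

(** [upper_exp_le I f c] expresses  \overline E_I(f) <= c, i.e.
    max_{p in I} [p f(1) + (1-p) f(0)] <= c  (the max exists since I is a
    nonempty compact interval), written out as a bound for every p in I. *)
Definition upper_exp_le (I : interval) (f : bool -> R) (c : R) : Prop :=
  forall p, lo I <= p <= hi I -> lin_exp p f <= c.

Definition forecasting_system := bstr -> interval.

Definition supermartingale (phi : forecasting_system) (M : bstr -> R) : Prop :=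
  forall s, upper_exp_le (phi s) (fun x => M (s ++ [x])) (M s).

Definition test_supermartingale (phi : forecasting_system) (M : bstr -> R) : Prop :=
  supermartingale phi M /\ (forall s, 0 <= M s) /\ M [] = 1.

(** * Total recursive functions on nat (Kleene, regular minimisation).
    [rec k f] : f, viewed on argument lists of length k, is total recursive. *)
Fixpoint prim_rec (g : list nat -> nat) (h : list nat -> nat) (n : nat)
  (xs : list nat) : nat :=
  match n with
  | O => g xs
  | S m => h (m :: prim_rec g h m xs :: xs)
  end.

Inductive rec : nat -> (list nat -> nat) -> Prop :=
| rec_zero k : rec k (fun _ => 0%nat)
| rec_succ : rec 1 (fun l => S (nth 0 l 0%nat))
| rec_proj k i : (i < k)%nat -> rec k (fun l => nth i l 0%nat)
| rec_comp k (g : list nat -> nat) (hs : list (list nat -> nat)) :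
    rec (length hs) g -> (forall h, In h hs -> rec k h) ->
    rec k (fun l => g (map (fun h => h l) hs))
| rec_prim k g h : rec k g -> rec (S (S k)) h ->
    rec (S k) (fun l => prim_rec g h (hd 0%nat l) (tl l))
| rec_min k (g : list nat -> nat) (f : list nat -> nat) : rec (S k) g ->
    (forall xs, length xs = k ->
       g (f xs :: xs) = 0%nat /\ forall m, (m < f xs)%nat -> g (m :: xs) <> 0%nat) ->
    rec k f
| rec_ext k f f' : rec k f -> (forall l, length l = k -> f l = f' l) -> rec k f'.

(** Standard coding of binary strings as naturals: s |-> binary numeral 1s. *)
Definition code (s : bstr) : nat :=
  fold_left (fun n (b : bool) => (2 * n + (if b then 1 else 0))%nat) s 1%nat.

Definition rat_of (sg num den : nat) : R :=
  (if Nat.eqb sg 0 then 1 else -1) * INR num / INR den.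

Definition computable_map (r : bstr -> R) : Prop :=
  exists a b c : list nat -> nat, rec 2 a /\ rec 2 b /\ rec 2 c /\
    forall s N, (0 < c [code s; N])%nat /\
      Rabs (r s - rat_of (a [code s; N]) (b [code s; N]) (c [code s; N]))
        <= (/ 2) ^ N.

Definition recursive_rat_map (r : bstr -> R) : Prop :=
  exists a b c : list nat -> nat, rec 1 a /\ rec 1 b /\ rec 1 c /\
    forall s, (0 < c [code s])%nat /\
      r s = rat_of (a [code s]) (b [code s]) (c [code s]).

From Stdlib Require Import Reals Lra Lia List.
Import ListNotations.
Open Scope R_scope.

(** Let q(s) be the computable approximation of T(s) to precision
    2^-K, where K = code s >= 2^|s|; then |T(s) - q(s)| <= eps(s) := 1/K, and
    eps halves (at least) along every edge of the binary tree.  Put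
      R([]) = 1,   R(s) = (q(s) + 3 eps(s)) / 4   for s <> [].
    The slack 3 eps(s) in the parent dominates the errors of the children:
    4 R(sx) <= T(sx) + 2 eps(s) and T(s) + 2 eps(s) <= 4 R(s), so averaging
    the first bound over any p in phi(s) and using the supermartingale
    inequality of T gives that of R; positivity and |4R - T| <= 4 eps are
    immediate. *)

Lemma Rabs_le_bounds a b : Rabs a <= b -> - b <= a <= b.
Proof.
  intros H; split.
  - pose proof (Rle_abs (- a)); rewrite Rabs_Ropp in *; lra.
  - pose proof (Rle_abs a); lra.
Qed.

Section Shifted.

Variables (phi : forecasting_system) (T q eps : bstr -> R).

Hypothesis T_test : test_supermartingale phi T.
Hypothesis eps_pos : forall s, 0 < eps s.
Hypothesis eps_root : eps [] = 1.
Hypothesis eps_halve : forall s x, eps (s ++ [x]) <= eps s / 2.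
Hypothesis q_close : forall s, Rabs (T s - q s) <= eps s.

Definition shifted (s : bstr) : R :=
  match s with [] => 1 | _ => (q s + 3 * eps s) / 4 end.

Lemma shifted_nonroot s : s <> [] -> shifted s = (q s + 3 * eps s) / 4.
Proof. destruct s; [congruence | reflexivity]. Qed.

(** A child overestimates T by at most its slack 4 eps(sx) <= 2 eps(s). *)
Lemma shifted_child_bound s x : 4 * shifted (s ++ [x]) <= T (s ++ [x]) + 2 * eps s.
Proof.
  rewrite shifted_nonroot by (destruct s; discriminate).
  pose proof (Rabs_le_bounds _ _ (q_close (s ++ [x]))).
  pose proof (eps_halve s x). lra.
Qed.

Lemma shifted_parent_bound s : T s + 2 * eps s <= 4 * shifted s.
Proof.
  destruct T_test as (_ & _ & T_root).
  destruct s as [|b s].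
  - simpl; rewrite T_root, eps_root; lra.
  - rewrite shifted_nonroot by discriminate.
    pose proof (Rabs_le_bounds _ _ (q_close (b :: s))). lra.
Qed.

Lemma shifted_supermartingale : supermartingale phi shifted.
Proof.
  destruct T_test as (T_super & _ & _).
  intros s p Hp.
  assert (Hp01 : 0 <= p <= 1) by (destruct (phi s); simpl in *; lra).
  pose proof (T_super s p Hp) as HT; unfold lin_exp in *.
  pose proof (shifted_child_bound s true).
  pose proof (shifted_child_bound s false).
  pose proof (shifted_parent_bound s).
  assert (p * (4 * shifted (s ++ [true])) <= p * (T (s ++ [true]) + 2 * eps s))
    by (apply Rmult_le_compat_l; lra).
  assert ((1 - p) * (4 * shifted (s ++ [false]))
          <= (1 - p) * (T (s ++ [false]) + 2 * eps s))
    by (apply Rmult_le_compat_l; lra).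
  lra.
Qed.

Lemma shifted_pos s : 0 < shifted s.
Proof.
  destruct T_test as (_ & T_nonneg & _).
  pose proof (shifted_parent_bound s); pose proof (T_nonneg s); pose proof (eps_pos s).
  lra.
Qed.

Lemma shifted_test : test_supermartingale phi shifted.
Proof.
  split; [exact shifted_supermartingale|].
  split; [intro s; left; apply shifted_pos | reflexivity].
Qed.

Lemma shifted_close s : Rabs (4 * shifted s - T s) <= 4 * eps s.
Proof.
  destruct T_test as (_ & _ & T_root).
  apply Rabs_le. destruct s as [|b s].
  - simpl; rewrite T_root, eps_root; lra.
  - rewrite shifted_nonroot by discriminate.
    pose proof (Rabs_le_bounds _ _ (q_close (b :: s))); pose proof (eps_pos (b :: s)).
    lra.
Qed.

(** Closeness to a nonnegative [T] bounds [q] from below; this is what makes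
    the numerator of the shifted value nonnegative. *)
Lemma approx_lower_bound s : - eps s <= q s.
Proof.
  destruct T_test as (_ & T_nonneg & _).
  pose proof (Rabs_le_bounds _ _ (q_close s)); pose proof (T_nonneg s). lra.
Qed.

End Shifted.

Lemma code_app s x : code (s ++ [x]) = (2 * code s + (if x then 1 else 0))%nat.
Proof. unfold code; rewrite fold_left_app; reflexivity. Qed.

(** The leading 1 of the binary numeral gives code s >= 2^|s|. *)
Lemma code_ge_pow s : (2 ^ length s <= code s)%nat.
Proof.
  enough (H : forall a, (a * 2 ^ length s
             <= fold_left (fun n (b : bool) => (2 * n + (if b then 1 else 0))%nat) s a)%nat)
    by (unfold code; specialize (H 1%nat); lia).
  induction s as [|b s IH]; intros a; simpl; [lia|].
  eapply Nat.le_trans; [|apply IH]. destruct b; nia.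
Qed.

Lemma code_pos s : (0 < code s)%nat.
Proof. pose proof (code_ge_pow s); pose proof (Nat.pow_nonzero 2 (length s)); lia. Qed.

Lemma INR_code_pos s : 0 < INR (code s).
Proof. apply lt_0_INR, code_pos. Qed.

Definition code_err (s : bstr) : R := / INR (code s).

Lemma code_err_halve s x : code_err (s ++ [x]) <= code_err s / 2.
Proof.
  unfold code_err, Rdiv; rewrite <- Rinv_mult, code_app.
  pose proof (INR_code_pos s).
  apply Rinv_le_contravar; [lra|].
  rewrite plus_INR, mult_INR; destruct x; simpl; lra.
Qed.

Lemma code_err_pos s : 0 < code_err s.
Proof. apply Rinv_0_lt_compat, INR_code_pos. Qed.

Lemma code_err_root : code_err [] = 1.
Proof. unfold code_err; simpl; lra. Qed.

Lemma half_pow_inv n : (/ 2) ^ n = / INR (2 ^ n).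
Proof. rewrite pow_INR, pow_inv; simpl; f_equal; f_equal; ring. Qed.

Lemma code_err_le_half_pow s : code_err s <= (/ 2) ^ length s.
Proof.
  unfold code_err; rewrite half_pow_inv.
  apply Rinv_le_contravar; [apply lt_0_INR, Nat.neq_0_lt_0, Nat.pow_nonzero; lia|].
  apply le_INR, code_ge_pow.
Qed.

Lemma half_pow_code_le_code_err s : (/ 2) ^ code s <= code_err s.
Proof.
  unfold code_err; rewrite half_pow_inv.
  apply Rinv_le_contravar; [apply INR_code_pos|].
  apply le_INR, Nat.lt_le_incl, Nat.pow_gt_lin_r; lia.
Qed.

Lemma rec_comp1 k g h : rec 1 g -> rec k h -> rec k (fun l => g [h l]).
Proof.
  intros Hg Hh. exact (rec_comp k g [h] Hg ltac:(intros h' [<-|[]]; assumption)).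
Qed.

Lemma rec_comp2 k g h1 h2 :
  rec 2 g -> rec k h1 -> rec k h2 -> rec k (fun l => g [h1 l; h2 l]).
Proof.
  intros Hg H1 H2.
  exact (rec_comp k g [h1; h2] Hg ltac:(intros h [<-|[<-|[]]]; assumption)).
Qed.

Lemma rec_binop k (op : nat -> nat -> nat) f g :
  rec 2 (fun l => op (nth 0 l 0%nat) (nth 1 l 0%nat)) ->
  rec k f -> rec k g -> rec k (fun l => op (f l) (g l)).
Proof. intros Hop Hf Hg. exact (rec_comp2 k _ f g Hop Hf Hg). Qed.

Lemma rec_const k n : rec k (fun _ => n).
Proof. induction n; [apply rec_zero | exact (rec_comp1 k _ _ rec_succ IHn)]. Qed.

Lemma rec_add2 : rec 2 (fun l => nth 0 l 0 + nth 1 l 0)%nat.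
Proof.
  eapply rec_ext.
  - apply (rec_prim 1 (fun l => nth 0 l 0%nat) (fun l => S (nth 0 [nth 1 l 0%nat] 0%nat))).
    + apply rec_proj; lia.
    + exact (rec_comp1 3 _ _ rec_succ (rec_proj 3 1 ltac:(lia))).
  - intros [|a [|b [|]]] Hl; simpl in Hl; try discriminate.
    simpl; induction a as [|a IH]; simpl; congruence.
Qed.

Lemma rec_add k f g : rec k f -> rec k g -> rec k (fun l => f l + g l)%nat.
Proof. exact (rec_binop k Nat.add f g rec_add2). Qed.

Lemma rec_mul2 : rec 2 (fun l => nth 0 l 0 * nth 1 l 0)%nat.
Proof.
  eapply rec_ext.
  - apply (rec_prim 1 (fun _ => 0%nat) (fun l => nth 1 l 0%nat + nth 2 l 0%nat)%nat).
    + apply rec_zero.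
    + exact (rec_add 3 _ _ (rec_proj 3 1 ltac:(lia)) (rec_proj 3 2 ltac:(lia))).
  - intros [|a [|b [|]]] Hl; simpl in Hl; try discriminate.
    simpl; induction a as [|a IH]; simpl; [reflexivity | rewrite IH; lia].
Qed.

Lemma rec_mul k f g : rec k f -> rec k g -> rec k (fun l => f l * g l)%nat.
Proof. exact (rec_binop k Nat.mul f g rec_mul2). Qed.

Lemma rec_pred : rec 1 (fun l => pred (nth 0 l 0%nat)).
Proof.
  eapply rec_ext.
  - apply (rec_prim 0 (fun _ => 0%nat) (fun l => nth 0 l 0%nat)).
    + apply rec_zero.
    + apply rec_proj; lia.
  - intros [|a [|]] Hl; simpl in Hl; try discriminate.
    simpl; destruct a; reflexivity.
Qed.

Lemma rec_sub_rev : rec 2 (fun l => nth 1 l 0 - nth 0 l 0)%nat.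
Proof.
  eapply rec_ext.
  - apply (rec_prim 1 (fun l => nth 0 l 0%nat) (fun l => pred (nth 0 [nth 1 l 0%nat] 0%nat))).
    + apply rec_proj; lia.
    + exact (rec_comp1 3 _ _ rec_pred (rec_proj 3 1 ltac:(lia))).
  - intros [|a [|b [|]]] Hl; simpl in Hl; try discriminate.
    simpl; induction a as [|a IH]; simpl; [lia | rewrite IH; lia].
Qed.

Lemma rec_sub k f g : rec k f -> rec k g -> rec k (fun l => f l - g l)%nat.
Proof. intros Hf Hg. exact (rec_comp2 k _ g f rec_sub_rev Hg Hf). Qed.

Definition if_zero (x a b : nat) : nat := (a * (1 - x) + b * (1 - (1 - x)))%nat.

Lemma if_zero_spec x a b : if_zero x a b = if Nat.eqb x 0 then a else b.
Proof. unfold if_zero; destruct x; simpl; lia. Qed.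

Lemma rec_if_zero k x f g :
  rec k x -> rec k f -> rec k g -> rec k (fun l => if_zero (x l) (f l) (g l)).
Proof.
  intros Hx Hf Hg; unfold if_zero.
  apply rec_add; apply rec_mul; auto; repeat apply rec_sub; auto using rec_const.
Qed.

(** Shifting the rational ±B/C by 3/K and dividing by 4 gives the rational
    with numerator 3C ± BK and denominator 4CK; in the negative case the
    lower bound -1/K makes the truncated subtraction exact. *)
Definition shift_num (A B C K : nat) : nat :=
  if_zero A (3 * C + B * K) (3 * C - B * K).

Lemma rat_of_shift A B C K : (0 < C)%nat -> (0 < K)%nat ->
  - / INR K <= rat_of A B C ->
  (rat_of A B C + 3 * / INR K) / 4 = rat_of 0 (shift_num A B C K) (4 * C * K).
Proof.
  intros HC HK Hlow.
  apply lt_0_INR in HC; apply lt_0_INR in HK.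
  unfold shift_num, rat_of in *; rewrite if_zero_spec; simpl Nat.eqb.
  destruct (Nat.eqb A 0).
  - rewrite plus_INR, !mult_INR; simpl INR. field; lra.
  - assert (HBK : (B * K <= 3 * C)%nat).
    { apply INR_le; rewrite !mult_INR; simpl INR.
      (* -1/K <= -B/C, i.e. B/C <= 1/K, multiplied by CK *)
      assert (HKinv : / INR K * INR K = 1) by (field; lra).
      assert (HCinv : / INR C * INR C = 1) by (field; lra).
      pose proof (Rinv_0_lt_compat _ HK); pose proof (Rinv_0_lt_compat _ HC).
      unfold Rdiv in Hlow; nra. }
    rewrite minus_INR by exact HBK; rewrite !mult_INR; simpl INR. field; lra.
Qed.

(** For the recursive approximation (a, b, c) of T, evaluated on the diagonal
    (string code = precision index), the numerator and denominator of the
    shifted value at the string whose code is the argument. *)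
Definition diag (f : list nat -> nat) (l : list nat) : nat :=
  f [nth 0 l 0%nat; nth 0 l 0%nat].

Definition shifted_den (c : list nat -> nat) (l : list nat) : nat :=
  (4 * diag c l * nth 0 l 0%nat)%nat.

Definition shifted_num (a b c : list nat -> nat) (l : list nat) : nat :=
  if_zero (nth 0 l 0 - 1)%nat (shifted_den c l)
    (shift_num (diag a l) (diag b l) (diag c l) (nth 0 l 0%nat)).

Lemma rec_arg : rec 1 (fun l => nth 0 l 0%nat).
Proof. apply rec_proj; lia. Qed.

Lemma rec_diag f : rec 2 f -> rec 1 (diag f).
Proof. intros Hf. exact (rec_comp2 1 f _ _ Hf rec_arg rec_arg). Qed.

Lemma rec_shifted_den c : rec 2 c -> rec 1 (shifted_den c).
Proof.
  intros Hc; unfold shifted_den.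
  repeat apply rec_mul; auto using rec_const, rec_diag, rec_arg.
Qed.

Lemma rec_shifted_num a b c : rec 2 a -> rec 2 b -> rec 2 c -> rec 1 (shifted_num a b c).
Proof.
  intros Ha Hb Hc; unfold shifted_num, shift_num.
  pose proof rec_arg.
  repeat first [ apply rec_if_zero | apply rec_add | apply rec_mul | apply rec_sub
               | apply rec_const | apply rec_diag | apply rec_shifted_den | assumption ].
Qed.

Definition code_rat (a b c : list nat -> nat) (s : bstr) : R :=
  rat_of (diag a [code s]) (diag b [code s]) (diag c [code s]).

Lemma shifted_rational (a b c : list nat -> nat) s :
  (0 < diag c [code s])%nat -> - code_err s <= code_rat a b c s ->
  shifted (code_rat a b c) code_err s
  = rat_of 0 (shifted_num a b c [code s]) (shifted_den c [code s]).
Proof.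
  intros Hc Hlow.
  unfold shifted_num, shifted_den; simpl nth.
  destruct s as [|x s].
  - change (code []) with 1%nat in *.
    rewrite if_zero_spec; unfold rat_of; cbn [Nat.eqb Nat.sub shifted].
    field; apply not_0_INR; lia.
  - assert (HK : (2 <= code (x :: s))%nat).
    { pose proof (code_ge_pow (x :: s)); simpl length in *.
      pose proof (Nat.pow_nonzero 2 (length s)); rewrite Nat.pow_succ_r' in *; lia. }
    rewrite if_zero_spec; replace (Nat.eqb (code (x :: s) - 1) 0) with false
      by (symmetry; apply Nat.eqb_neq; lia).
    rewrite shifted_nonroot by discriminate.
    rewrite <- rat_of_shift by (auto; lia).
    unfold code_err, Rdiv; reflexivity.
Qed.

Theorem lemma4p5 (phi : forecasting_system) (T : bstr -> R) :
  test_supermartingale phi T -> computable_map T ->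
  exists Rm : bstr -> R,
    test_supermartingale phi Rm /\ recursive_rat_map Rm /\
    (forall s, 0 < Rm s) /\
    (forall s, Rabs (4 * Rm s - T s) <= 4 * (/ 2) ^ length s).
Proof.
  intros T_test (a & b & c & Ha & Hb & Hc & Happrox).
  set (q := code_rat a b c).
  assert (q_close : forall s, Rabs (T s - q s) <= code_err s).
  { intro s. eapply Rle_trans; [apply (Happrox s (code s)) | apply half_pow_code_le_code_err]. }
  exists (shifted q code_err); split; [|split; [|split]].
  - exact (shifted_test phi T q code_err T_test code_err_pos code_err_root code_err_halve q_close).
  - exists (fun _ => 0%nat), (shifted_num a b c), (shifted_den c).
    repeat split; auto using rec_zero, rec_shifted_num, rec_shifted_den.
    + pose proof (proj1 (Happrox s (code s))); pose proof (code_pos s).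
      unfold shifted_den, diag; simpl; lia.
    + apply shifted_rational; [exact (proj1 (Happrox s (code s))) |].
      exact (approx_lower_bound phi T q code_err T_test q_close s).
  - exact (shifted_pos phi T q code_err T_test code_err_pos code_err_root q_close).
  - intro s. eapply Rle_trans;
      [apply (shifted_close phi T q code_err T_test code_err_pos code_err_root q_close) |].
    pose proof (code_err_le_half_pow s); lra.
Qed.
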